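(* Let $\varepsilon\neq0$ and $\varepsilon'$ be real constants and consider the almost-Riemannian structure on $\mathbb{R}^2$ (coordinates $(y,z)$) with orthonormal frame $F_1=(\varepsilon z+\frac{y^2}{2}+\varepsilon' y^3)\frac{\partial}{\partial z}$, $F_2=\frac{\partial}{\partial y}$. Its desingularization is the sub-Riemannian structure on $\mathbb{R}^3$ (coordinates $(x,y,z)$) with orthonormal frame $\widetilde F_1=\frac{\partial}{\partial x}+(\varepsilon z+\frac{y^2}{2}+\varepsilon' y^3)\frac{\partial}{\partial z}$, $\widetilde F_2=\frac{\partial}{\partial y}$. Then this sub-Riemannian structure is of Martinet type with Martinet surface $\{y=0\}$, and there is a local change of coordinates $(x,y,z)\mapsto(\tilde x,\tilde y,\tilde z)$ near the origin (for instance $\tilde x=\frac{e^{-\varepsilon x}}{-\varepsilon}-1$, $\tilde y=y\sqrt{1+2\varepsilon' y}$, $\tilde z=z e^{-\varepsilon x}$) in which the distribution is $\ker\big(d\tilde z-\frac{\tilde y^2}{2}d\tilde x\big)$ and the sub-Riemannian metric is $$g=\frac{d\tilde x^2}{\varepsilon^2(1+\tilde x)^2}+\frac{d\tilde y^2}{(1+2\varepsilon'\tilde y+o(\tilde y))^2},$$ i.e. it is a sub-Riemannian Martinet model of order zero.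
   Context: Desingularization: given a 2-dimensional ARS with local orthonormal frame $(F_1,F_2)$ on $M$ such that $F_1(q)=0$ at a point $q$ where the span of $F_1,F_2$ is one-dimensional, one defines on $M\times\mathbb{R}$ (extra coordinate $x$) the vector fields $\widetilde F_1,\widetilde F_2$ with $\pi_{1*}\widetilde F_i=F_i$, $\pi_{2*}\widetilde F_2=0$, $\pi_{2*}\widetilde F_1=\partial/\partial x$, and declares them orthonormal, giving a rank-2 sub-Riemannian structure on a 3-manifold. A rank-2 distribution $\Delta$ on a 3-manifold is of Martinet type near a point when the Martinet surface, the set of points $p$ with $[\Delta,\Delta](p)=\Delta(p)$, is a surface and $[[\Delta,\Delta],\Delta](p)=T_pM$ there. *)

From Stdlib Require Import Reals Lra List.
Import ListNotations.
Open Scope R_scope.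

Definition pt : Type := (R * R * R)%type.

(** i-th coordinate: 0 -> x, 1 -> y, 2 -> z. *)
Definition coord (v : pt) (i : nat) : R :=
  match i with
  | O => fst (fst v)
  | S O => snd (fst v)
  | _ => snd v
  end.

Definition vadd (u v : pt) : pt :=
  (coord u 0 + coord v 0, coord u 1 + coord v 1, coord u 2 + coord v 2).
Definition vscal (a : R) (v : pt) : pt :=
  (a * coord v 0, a * coord v 1, a * coord v 2).

Definition e (j : nat) : pt :=
  match j with
  | O => (1, 0, 0)
  | S O => (0, 1, 0)
  | _ => (0, 0, 1)
  end.

Definition pd (f : pt -> R) (j : nat) (p : pt) (l : R) : Prop :=
  derivable_pt_lim (fun t => f (vadd p (vscal t (e j)))) 0 l.

Definition cont_at (f : pt -> R) (p : pt) : Prop :=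
  forall eps, 0 < eps -> exists d, 0 < d /\
    forall q, Rabs (coord q 0 - coord p 0) < d -> Rabs (coord q 1 - coord p 1) < d ->
      Rabs (coord q 2 - coord p 2) < d -> Rabs (f q - f p) < eps.

Fixpoint Cn (n : nat) (f : pt -> R) (U : pt -> Prop) : Prop :=
  match n with
  | O => forall p, U p -> cont_at f p
  | S m => forall j, (j < 3)%nat ->
      exists g : pt -> R, (forall p, U p -> pd f j p (g p)) /\ Cn m g U
  end.

Definition smooth_on (f : pt -> R) (U : pt -> Prop) : Prop := forall n, Cn n f U.

Definition ball0 (r : R) (p : pt) : Prop :=
  coord p 0 ^ 2 + coord p 1 ^ 2 + coord p 2 ^ 2 < r ^ 2.

Definition vfield : Type := pt -> pt.

Definition is_lie_bracket (X Y Z : vfield) : Prop :=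
  forall p i, (i < 3)%nat ->
    exists dX dY : nat -> R,
      (forall j, (j < 3)%nat ->
         pd (fun q => coord (X q) i) j p (dX j) /\
         pd (fun q => coord (Y q) i) j p (dY j)) /\
      coord (Z p) i =
        (coord (X p) 0 * dY 0%nat - coord (Y p) 0 * dX 0%nat) +
        (coord (X p) 1 * dY 1%nat - coord (Y p) 1 * dX 1%nat) +
        (coord (X p) 2 * dY 2%nat - coord (Y p) 2 * dX 2%nat).

Fixpoint lincomb (cs : list R) (l : list pt) : pt :=
  match cs, l with
  | c :: cs', u :: l' => vadd (vscal c u) (lincomb cs' l')
  | _, _ => (0, 0, 0)
  end.
Definition in_span (l : list pt) (v : pt) : Prop := exists cs, v = lincomb cs l.

(** The distribution Delta = span(X1, X2) and the distributions
    [SDist,SDist] = span(X1, X2, [X1,X2]) and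
    [[SDist,SDist],SDist] = span(X1, X2, [X1,X2], [X1,[X1,X2]], [X2,[X1,X2]]),
    where B = [X1,X2], B1 = [X1,B], B2 = [X2,B]. *)
Definition SDist (X1 X2 : vfield) (p : pt) : pt -> Prop := in_span [X1 p; X2 p].
Definition SDist2 (X1 X2 B : vfield) (p : pt) : pt -> Prop :=
  in_span [X1 p; X2 p; B p].
Definition SDist3 (X1 X2 B B1 B2 : vfield) (p : pt) : pt -> Prop :=
  in_span [X1 p; X2 p; B p; B1 p; B2 p].

Definition martinet_pt (X1 X2 B : vfield) (p : pt) : Prop :=
  forall v, SDist2 X1 X2 B p v <-> SDist X1 X2 p v.

Definition fM (eps eps' y z : R) : R := eps * z + y ^ 2 / 2 + eps' * y ^ 3.
Definition Ft1 (eps eps' : R) : vfield :=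
  fun p => (1, 0, fM eps eps' (coord p 1) (coord p 2)).
Definition Ft2 : vfield := fun _ => (0, 1, 0).

(** Differential of Phi at p applied to v, i-th component, given the Jacobian J. *)
Definition dapp (J : nat -> nat -> R) (i : nat) (v : pt) : R :=
  J i 0%nat * coord v 0 + J i 1%nat * coord v 1 + J i 2%nat * coord v 2.

Definition det3 (J : nat -> nat -> R) : R :=
  J 0%nat 0%nat * (J 1%nat 1%nat * J 2%nat 2%nat - J 1%nat 2%nat * J 2%nat 1%nat)
  - J 0%nat 1%nat * (J 1%nat 0%nat * J 2%nat 2%nat - J 1%nat 2%nat * J 2%nat 0%nat)
  + J 0%nat 2%nat * (J 1%nat 0%nat * J 2%nat 1%nat - J 1%nat 1%nat * J 2%nat 0%nat).

(* Brackets: [F1,F2] = -(y + 3 eps' y^2) d/dz, [F1,[F1,F2]] = eps (y + 3 eps' y^2) d/dz and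
   [F2,[F1,F2]] = -(1 + 6 eps' y) d/dz.  Near the origin [F1,F2] is tangent to the distribution
   exactly where y = 0, and there [F2,[F1,F2]] = -d/dz completes the frame.
   Normal form: with f = eps z + y^2/2 + eps' y^3 the distribution is ker (dz - f dx), and since
   ytilde^2 = y^2 (1 + 2 eps' y) one has dztilde - ytilde^2/2 dxtilde = e^(-eps x) (dz - f dx).
   On the frame, dxtilde = e^(-eps x) dx = -eps (1 + xtilde) dx, and dytilde = h dy with
   h(ytilde) = dytilde/dy = 1 + 2 eps' ytilde + O(ytilde^2).
   Smoothness is obtained by writing the coordinate functions in a small language of expressions
   that is closed under partial differentiation. *)

From Coquelicot Require Import Coquelicot.
From Stdlib Require Import Reals List Lra Lia Psatz ClassicalEpsilon.
Import ListNotations.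
Open Scope R_scope.

(** * Smooth expressions *)

Inductive sexpr : Type :=
  | SConst (c : R)
  | SCoord (i : nat)
  | SAdd (a b : sexpr)
  | SMul (a b : sexpr)
  | SExp (a : R) (i : nat)
  | SSqrt (a b : R) (i : nat)
  | SInvSqrt (a b : R) (i : nat).

Fixpoint eval (E : sexpr) (q : pt) : R :=
  match E with
  | SConst c => c
  | SCoord i => coord q i
  | SAdd a b => eval a q + eval b q
  | SMul a b => eval a q * eval b q
  | SExp a i => exp (a * coord q i)
  | SSqrt a b i => sqrt (a + b * coord q i)
  | SInvSqrt a b i => / sqrt (a + b * coord q i)
  end.

Fixpoint deriv (E : sexpr) (j : nat) : sexpr :=
  match E with
  | SConst _ => SConst 0
  | SCoord i => SConst (coord (e j) i)
  | SAdd a b => SAdd (deriv a j) (deriv b j)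
  | SMul a b => SAdd (SMul (deriv a j) b) (SMul a (deriv b j))
  | SExp a i => SMul (SConst (a * coord (e j) i)) (SExp a i)
  | SSqrt a b i => SMul (SConst (b * coord (e j) i / 2)) (SInvSqrt a b i)
  | SInvSqrt a b i =>
      SMul (SConst (- (b * coord (e j) i / 2)))
           (SMul (SInvSqrt a b i) (SMul (SInvSqrt a b i) (SInvSqrt a b i)))
  end.

Fixpoint defined_at (E : sexpr) (q : pt) : Prop :=
  match E with
  | SAdd a b | SMul a b => defined_at a q /\ defined_at b q
  | SSqrt a b i | SInvSqrt a b i => 0 < a + b * coord q i
  | _ => True
  end.

Lemma defined_at_deriv E j q : defined_at E q -> defined_at (deriv E j) q.
Proof. induction E; cbn; tauto. Qed.

Lemma coord_shift p t j i : coord (vadd p (vscal t (e j))) i = coord p i + t * coord (e j) i.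
Proof. destruct i as [|[|i]]; reflexivity. Qed.

Lemma vadd_vscal0 p v : vadd p (vscal 0 v) = p.
Proof. destruct p as [[x y] z]; unfold vadd, vscal, coord; cbn; f_equal; [f_equal|]; ring. Qed.

Lemma derivable_pt_lim_along_coord (g : R -> R) p j i l :
  derivable_pt_lim (fun t => g (coord p i + t * coord (e j) i)) 0 l ->
  derivable_pt_lim (fun t => g (coord (vadd p (vscal t (e j))) i)) 0 l.
Proof. apply derivable_pt_lim_ext; intros t; now rewrite coord_shift. Qed.

Lemma pd_eval E j p : defined_at E p -> pd (eval E) j p (eval (deriv E j) p).
Proof.
  unfold pd; induction E; cbn [eval deriv defined_at]; intros Hdef.
  - apply derivable_pt_lim_const.
  - apply (derivable_pt_lim_along_coord (fun u => u)).
    apply is_derive_Reals; auto_derive; [easy|ring].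
  - destruct Hdef; apply derivable_pt_lim_plus; auto.
  - destruct Hdef as [Ha Hb].
    pose proof (derivable_pt_lim_mult _ _ _ _ _ (IHE1 Ha) (IHE2 Hb)) as H.
    cbv beta in H; rewrite vadd_vscal0 in H. exact H.
  - apply (derivable_pt_lim_along_coord (fun u => exp (a * u))).
    apply is_derive_Reals; auto_derive; [easy|].
    rewrite Rmult_0_l, Rplus_0_r; ring.
  - apply (derivable_pt_lim_along_coord (fun u => sqrt (a + b * u))).
    assert (0 < sqrt (a + b * coord p i)) by now apply sqrt_lt_R0.
    apply is_derive_Reals; auto_derive; rewrite Rmult_0_l, Rplus_0_r; [lra|].
    field; lra.
  - apply (derivable_pt_lim_along_coord (fun u => / sqrt (a + b * u))).
    assert (0 < sqrt (a + b * coord p i)) by now apply sqrt_lt_R0.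
    apply is_derive_Reals; auto_derive; rewrite Rmult_0_l, Rplus_0_r.
    + repeat split; lra.
    + field; lra.
Qed.

Lemma cont_at_continuous (f : pt -> R) p : continuous f p -> cont_at f p.
Proof.
  intros Hf eps Heps.
  destruct (proj1 (filterlim_locally f (f p)) Hf (mkposreal eps Heps)) as [d Hd].
  exists d; split; [apply cond_pos|].
  intros q H0 H1 H2. apply (Hd q). destruct p as [[x y] z], q as [[x' y'] z'].
  repeat split; assumption.
Qed.

Lemma continuous_coord p i : continuous (fun q : pt => coord q i) p.
Proof.
  destruct p as [[x y] z]; destruct i as [|[|i]]; cbn [coord].
  - apply (continuous_comp fst fst); [apply continuous_fst | apply continuous_fst].
  - apply (continuous_comp fst snd); [apply continuous_fst | apply continuous_snd].
  - apply continuous_snd.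
Qed.

Lemma continuous_of_coord (g : R -> R) p i :
  ex_derive g (coord p i) -> continuous (fun q : pt => g (coord q i)) p.
Proof.
  intros Hg. apply (continuous_comp (fun q : pt => coord q i) g).
  - apply continuous_coord.
  - exact (ex_derive_continuous (K := R_AbsRing) (V := R_NormedModule) g _ Hg).
Qed.

Lemma continuous_eval E p : defined_at E p -> continuous (eval E) p.
Proof.
  induction E; cbn [eval defined_at]; intros Hdef.
  - apply continuous_const.
  - apply continuous_coord.
  - destruct Hdef. apply (continuous_plus (eval E1) (eval E2)); auto.
  - destruct Hdef. apply (continuous_mult (eval E1) (eval E2)); auto.
  - apply (continuous_of_coord (fun u => exp (a * u))). auto_derive; easy.
  - apply (continuous_of_coord (fun u => sqrt (a + b * u))). auto_derive; lra.
  - apply (continuous_of_coord (fun u => / sqrt (a + b * u))).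
    assert (0 < sqrt (a + b * coord p i)) by now apply sqrt_lt_R0.
    auto_derive; repeat split; lra.
Qed.

Lemma Cn_eval n E (U : pt -> Prop) :
  (forall q, U q -> defined_at E q) -> Cn n (eval E) U.
Proof.
  revert E; induction n as [|n IHn]; cbn; intros E HU.
  - intros p Hp. apply cont_at_continuous, continuous_eval, HU, Hp.
  - intros j _. exists (eval (deriv E j)). split.
    + intros p Hp. apply pd_eval, HU, Hp.
    + apply IHn. intros q Hq. apply defined_at_deriv, HU, Hq.
Qed.

Lemma pd_ext (f g : pt -> R) j p l : (forall q, f q = g q) -> pd g j p l -> pd f j p l.
Proof. intros H; apply derivable_pt_lim_ext; intros t; symmetry; apply H. Qed.

(** * Lie brackets of the frame and the Martinet surface *)

Definition represents (X : vfield) (XE : nat -> sexpr) : Prop :=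
  forall q i, (i < 3)%nat -> defined_at (XE i) q /\ coord (X q) i = eval (XE i) q.

Lemma is_lie_bracket_of_represents (X Y Z : vfield) (XE YE : nat -> sexpr) :
  represents X XE -> represents Y YE ->
  (forall p i, (i < 3)%nat -> coord (Z p) i =
     (coord (X p) 0 * eval (deriv (YE i) 0) p - coord (Y p) 0 * eval (deriv (XE i) 0) p) +
     (coord (X p) 1 * eval (deriv (YE i) 1) p - coord (Y p) 1 * eval (deriv (XE i) 1) p) +
     (coord (X p) 2 * eval (deriv (YE i) 2) p - coord (Y p) 2 * eval (deriv (XE i) 2) p)) ->
  is_lie_bracket X Y Z.
Proof.
  intros HX HY HZ p i Hi.
  exists (fun j => eval (deriv (XE i) j) p), (fun j => eval (deriv (YE i) j) p).
  split; [|now apply HZ].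
  intros j _; split.
  - apply (pd_ext _ (eval (XE i))); [intros q; apply HX, Hi|]. apply pd_eval, HX, Hi.
  - apply (pd_ext _ (eval (YE i))); [intros q; apply HY, Hi|]. apply pd_eval, HY, Hi.
Qed.

Lemma pt_eq u v :
  coord u 0 = coord v 0 -> coord u 1 = coord v 1 -> coord u 2 = coord v 2 -> u = v.
Proof. destruct u as [[a b] c], v as [[a' b'] c']; cbn; intros -> -> ->; reflexivity. Qed.

Lemma coord_lincomb2 cs u1 u2 i :
  coord (lincomb cs [u1; u2]) i = nth 0 cs 0 * coord u1 i + nth 1 cs 0 * coord u2 i.
Proof. destruct cs as [|a [|b [|c cs]]]; destruct i as [|[|i]]; cbn; ring. Qed.

Lemma coord_lincomb3 cs u1 u2 u3 i :
  coord (lincomb cs [u1; u2; u3]) i =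
  nth 0 cs 0 * coord u1 i + nth 1 cs 0 * coord u2 i + nth 2 cs 0 * coord u3 i.
Proof. destruct cs as [|a [|b [|c [|d cs]]]]; destruct i as [|[|i]]; cbn; ring. Qed.

Lemma coord_lincomb5 cs u1 u2 u3 u4 u5 i :
  coord (lincomb cs [u1; u2; u3; u4; u5]) i =
  nth 0 cs 0 * coord u1 i + nth 1 cs 0 * coord u2 i + nth 2 cs 0 * coord u3 i
  + nth 3 cs 0 * coord u4 i + nth 4 cs 0 * coord u5 i.
Proof. destruct cs as [|a [|b [|c [|d [|f [|g cs]]]]]]; destruct i as [|[|i]]; cbn; ring. Qed.

Section Structure.
Variables eps k : R.

Definition fM_sexpr : sexpr :=
  SAdd (SAdd (SMul (SConst eps) (SCoord 2)) (SMul (SConst (1 / 2)) (SMul (SCoord 1) (SCoord 1))))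
       (SMul (SConst k) (SMul (SCoord 1) (SMul (SCoord 1) (SCoord 1)))).

Definition Ft1_sexpr (i : nat) : sexpr :=
  match i with O => SConst 1 | S O => SConst 0 | _ => fM_sexpr end.
Definition Ft2_sexpr (i : nat) : sexpr :=
  match i with O => SConst 0 | S O => SConst 1 | _ => SConst 0 end.

Definition bracket_F1F2 : vfield := fun p => (0, 0, - (coord p 1 + 3 * k * coord p 1 ^ 2)).
Definition bracket_F1B : vfield := fun p => (0, 0, eps * (coord p 1 + 3 * k * coord p 1 ^ 2)).
Definition bracket_F2B : vfield := fun p => (0, 0, - (1 + 6 * k * coord p 1)).

Definition bracket_F1F2_sexpr (i : nat) : sexpr :=
  match i with
  | O | S O => SConst 0
  | _ => SMul (SConst (-1)) (SAdd (SCoord 1) (SMul (SConst (3 * k)) (SMul (SCoord 1) (SCoord 1))))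
  end.

Lemma represents_Ft1 : represents (Ft1 eps k) Ft1_sexpr.
Proof.
  intros [[x y] z] i Hi; destruct i as [|[|[|i]]]; cbn; try lia; split; auto.
  unfold fM; field.
Qed.

Lemma represents_Ft2 : represents Ft2 Ft2_sexpr.
Proof. intros q i Hi; destruct i as [|[|[|i]]]; cbn; try lia; auto. Qed.

Lemma represents_bracket_F1F2 : represents bracket_F1F2 bracket_F1F2_sexpr.
Proof.
  intros [[x y] z] i Hi; destruct i as [|[|[|i]]]; cbn; try lia; split; auto; ring.
Qed.

Ltac check_bracket :=
  intros [[x y] z] i Hi; destruct i as [|[|[|i]]]; cbn; try lia; field.

Lemma lie_brackets :
  is_lie_bracket (Ft1 eps k) Ft2 bracket_F1F2 /\
  is_lie_bracket (Ft1 eps k) bracket_F1F2 bracket_F1B /\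
  is_lie_bracket Ft2 bracket_F1F2 bracket_F2B.
Proof.
  split; [|split].
  - apply (is_lie_bracket_of_represents _ _ _ _ _ represents_Ft1 represents_Ft2).
    check_bracket.
  - apply (is_lie_bracket_of_represents _ _ _ _ _ represents_Ft1 represents_bracket_F1F2).
    check_bracket.
  - apply (is_lie_bracket_of_represents _ _ _ _ _ represents_Ft2 represents_bracket_F1F2).
    check_bracket.
Qed.

Lemma SDist_iff x y z v :
  SDist (Ft1 eps k) Ft2 (x, y, z) v <-> coord v 2 = fM eps k y z * coord v 0.
Proof.
  destruct v as [[v0 v1] v2]; cbn [coord fst snd]; split.
  - intros [cs Hcs]. apply (f_equal (fun w => coord w 2)) in Hcs as Hv2.
    apply (f_equal (fun w => coord w 0)) in Hcs as Hv0.
    rewrite coord_lincomb2 in Hv0, Hv2; cbn in Hv0, Hv2. rewrite Hv0, Hv2; ring.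
  - intros Hv. exists [v0; v1].
    apply pt_eq; rewrite coord_lincomb2; cbn; [ring | ring | rewrite Hv; ring].
Qed.

Lemma martinet_pt_iff p :
  Rabs (k * coord p 1) < 1 / 4 ->
  (martinet_pt (Ft1 eps k) Ft2 bracket_F1F2 p <-> coord p 1 = 0).
Proof.
  destruct p as [[x y] z]; cbn [coord fst snd]; intros Hky%Rabs_def2. split.
  - intros Hsurf.
    assert (HB : SDist (Ft1 eps k) Ft2 (x, y, z) (bracket_F1F2 (x, y, z))).
    { apply Hsurf. exists [0; 0; 1].
      apply pt_eq; rewrite coord_lincomb3; cbn; ring. }
    rewrite SDist_iff in HB; cbn in HB.
    assert (Hy : y * (1 + 3 * (k * y)) = 0) by nra.
    destruct (Rmult_integral _ _ Hy); [assumption | lra].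
  - intros -> v; unfold SDist2, SDist; split; intros [cs ->].
    + exists [nth 0 cs 0; nth 1 cs 0].
      apply pt_eq; rewrite coord_lincomb3, coord_lincomb2; cbn; ring.
    + exists [nth 0 cs 0; nth 1 cs 0; 0].
      apply pt_eq; rewrite coord_lincomb3, coord_lincomb2; cbn; ring.
Qed.

Lemma SDist3_full_on_surface p :
  coord p 1 = 0 ->
  forall v, SDist3 (Ft1 eps k) Ft2 bracket_F1F2 bracket_F1B bracket_F2B p v.
Proof.
  destruct p as [[x y] z]; cbn [coord fst snd]; intros -> [[v0 v1] v2].
  exists [v0; v1; 0; 0; eps * z * v0 - v2].
  apply pt_eq; rewrite coord_lincomb5; cbn; unfold fM; field.
Qed.

End Structure.

(** * The coordinate ytilde and the metric coefficient h *)

Definition ytilde (k y : R) : R := y * sqrt (1 + 2 * k * y).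
Definition ytilde_deriv (k y : R) : R :=
  sqrt (1 + 2 * k * y) + k * y / sqrt (1 + 2 * k * y).

Section Ytilde.
Variables k y : R.
Hypothesis Hky : Rabs (k * y) < 1 / 4.

Let one_plus_pos : 0 < 1 + 2 * k * y.
Proof. apply Rabs_def2 in Hky; lra. Qed.

Let sqrt_gt_half : 1 / 2 < sqrt (1 + 2 * k * y).
Proof.
  pose proof (sqrt_sqrt _ (Rlt_le _ _ one_plus_pos)).
  pose proof (sqrt_pos (1 + 2 * k * y)).
  apply Rabs_def2 in Hky; nra.
Qed.

Lemma ytilde_deriv_pos : 0 < ytilde_deriv k y.
Proof.
  pose proof (sqrt_sqrt _ (Rlt_le _ _ one_plus_pos)) as Hss.
  pose proof sqrt_gt_half. unfold ytilde_deriv.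
  replace (sqrt (1 + 2 * k * y) + k * y / sqrt (1 + 2 * k * y))
    with ((sqrt (1 + 2 * k * y) * sqrt (1 + 2 * k * y) + k * y) / sqrt (1 + 2 * k * y))
    by (field; lra).
  rewrite Hss. apply Rabs_def2 in Hky. apply Rdiv_lt_0_compat; lra.
Qed.

Lemma abs_le_twice_abs_ytilde : Rabs y <= 2 * Rabs (ytilde k y).
Proof.
  unfold ytilde; rewrite Rabs_mult, (Rabs_right (sqrt _)) by lra.
  pose proof (Rabs_pos y); nra.
Qed.

(* With [w = k y]: [sqrt (1 + 2 w) = 1 + w + O(w^2)] and [w / sqrt (1 + 2 w) = w + O(w^2)]. *)
Lemma ytilde_deriv_expansion :
  Rabs (ytilde_deriv k y - (1 + 2 * k * ytilde k y)) <= 10 * (k * y) ^ 2.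
Proof.
  pose proof (sqrt_sqrt _ (Rlt_le _ _ one_plus_pos)) as Hss.
  pose proof sqrt_gt_half as Hs. apply Rabs_def2 in Hky.
  unfold ytilde_deriv, ytilde. set (s := sqrt (1 + 2 * k * y)) in *.
  set (w := k * y) in *.
  assert (Hs2 : s * s = 1 + 2 * w) by (unfold w; lra).
  replace (2 * k * (y * s)) with (2 * w * s) by (unfold w; ring).
  set (D := 1 + w - s).
  assert (HD : D * (1 + w + s) = w * w) by (unfold D; nra).
  assert (HDle : - (w * w) <= D <= w * w) by nra.
  set (q := s + w / s - (1 + 2 * w * s)).
  assert (Hq : q * s = D - 4 * w * w).
  { unfold q, D.
    replace ((s + w / s - (1 + 2 * w * s)) * s) with (s * s + w - s - 2 * w * (s * s))
      by (field; lra).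
    rewrite Hs2; ring. }
  apply Rabs_le; split; nra.
Qed.

End Ytilde.

(* Squaring reduces [ytilde k a = ytilde k b] to [(a - b) (a + b + 2 k (a^2 + a b + b^2)) = 0],
   and for [|k a|, |k b| < 1/4] the second factor has the common sign of [a] and [b]. *)
Lemma ytilde_inj k a b :
  Rabs (k * a) < 1 / 4 -> Rabs (k * b) < 1 / 4 -> ytilde k a = ytilde k b -> a = b.
Proof.
  unfold ytilde; intros Ha%Rabs_def2 Hb%Rabs_def2 H.
  assert (Pa : 0 < 1 + 2 * k * a) by lra. assert (Pb : 0 < 1 + 2 * k * b) by lra.
  pose proof (sqrt_lt_R0 _ Pa). pose proof (sqrt_lt_R0 _ Pb).
  pose proof (sqrt_sqrt _ (Rlt_le _ _ Pa)) as Qa. pose proof (sqrt_sqrt _ (Rlt_le _ _ Pb)) as Qb.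
  set (sa := sqrt (1 + 2 * k * a)) in *. set (sb := sqrt (1 + 2 * k * b)) in *.
  assert (Hsq : a * a * (1 + 2 * k * a) = b * b * (1 + 2 * k * b)).
  { rewrite <- Qa, <- Qb.
    replace (a * a * (sa * sa)) with ((a * sa) * (a * sa)) by ring. rewrite H. ring. }
  assert (Hf : (a - b) * (a + b + 2 * (k * a * a + k * a * b + k * b * b)) = 0) by nra.
  destruct (Rmult_integral _ _ Hf) as [E|E]; [lra|].
  destruct (Rtotal_order a 0) as [A|[A|A]].
  - assert (b < 0) by nra. nra.
  - subst a. assert (b * sb = 0) by lra. nra.
  - assert (b > 0) by nra. nra.
Qed.

Definition radius (k : R) : R := / (4 * (Rabs k + 1)).

Lemma radius_pos k : 0 < radius k.
Proof. unfold radius. pose proof (Rabs_pos k). apply Rinv_0_lt_compat. lra. Qed.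

Lemma lt_radius_small k y : Rabs y < radius k -> Rabs (k * y) < 1 / 4.
Proof.
  intros H. rewrite Rabs_mult.
  assert (Hr : (Rabs k + 1) * radius k = 1 / 4)
    by (unfold radius; pose proof (Rabs_pos k); field; lra).
  pose proof (Rabs_pos k). pose proof (Rabs_pos y). nra.
Qed.

Lemma ball0_coord1 r p : 0 < r -> ball0 r p -> Rabs (coord p 1) < r.
Proof. unfold ball0; intros Hr Hp. apply Rabs_def1; nra. Qed.

Lemma ball0_radius_small k p : ball0 (radius k) p -> Rabs (k * coord p 1) < 1 / 4.
Proof. intros Hp. apply lt_radius_small, ball0_coord1, Hp. apply radius_pos. Qed.

Lemma ball0_radius_pos k p : ball0 (radius k) p -> 0 < 1 + 2 * k * coord p 1.
Proof. intros Hp%ball0_radius_small%Rabs_def2; lra. Qed.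

(* [h (ytilde y) = ytilde' y], read through the inverse of [ytilde] on [(-r, r)].  Off the image
   of that interval [h] is irrelevant; it is set to [1 + 2 k t] there, so that its expansion holds
   trivially. *)
Definition metric_h (k r t : R) : R :=
  match excluded_middle_informative (exists y, Rabs y < r /\ ytilde k y = t) with
  | left H => ytilde_deriv k (proj1_sig (constructive_indefinite_description _ H))
  | right _ => 1 + 2 * k * t
  end.

Lemma metric_h_ytilde k y :
  Rabs y < radius k -> metric_h k (radius k) (ytilde k y) = ytilde_deriv k y.
Proof.
  intros Hy. unfold metric_h. destruct excluded_middle_informative as [H|H].
  - destruct (constructive_indefinite_description _ H) as [y' [Hy' E]]; cbn.
    f_equal. apply (ytilde_inj k); auto using lt_radius_small.
  - exfalso; apply H; exists y; auto.
Qed.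

Lemma metric_h_expansion k c : 0 < c -> exists d, 0 < d /\
  forall t, t <> 0 -> Rabs t < d ->
    Rabs (metric_h k (radius k) t - (1 + 2 * k * t)) <= c * Rabs t.
Proof.
  intros Hc. pose proof (pow2_ge_0 k) as Hk2.
  exists (c / (40 * (k ^ 2 + 1))). split; [apply Rdiv_lt_0_compat; lra|].
  intros t _ Ht. unfold metric_h. destruct excluded_middle_informative as [H|H].
  - destruct (constructive_indefinite_description _ H) as [y [Hy <-]]; cbn.
    pose proof (lt_radius_small _ _ Hy) as Hky.
    eapply Rle_trans; [apply ytilde_deriv_expansion, Hky|].
    pose proof (abs_le_twice_abs_ytilde _ _ Hky) as Hy2.
    set (T := Rabs (ytilde k y)) in *. pose proof (Rabs_pos y).
    assert (Hd : 40 * (k ^ 2 + 1) * T <= c).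
    { apply Rlt_le. apply (Rmult_lt_compat_l (40 * (k ^ 2 + 1))) in Ht; [|lra].
      replace (40 * (k ^ 2 + 1) * (c / (40 * (k ^ 2 + 1)))) with c in Ht by (field; lra).
      exact Ht. }
    replace ((k * y) ^ 2) with (k ^ 2 * Rabs y ^ 2) by (rewrite pow2_abs; ring).
    assert (Rabs y ^ 2 <= 4 * T * T) by nra.
    assert (k ^ 2 * T <= (k ^ 2 + 1) * T) by nra.
    nra.
  - rewrite Rminus_diag, Rabs_R0. pose proof (Rabs_pos t). nra.
Qed.

(** * The change of coordinates *)

Section NormalForm.
Variables eps k : R.
Hypothesis Heps : eps <> 0.

Definition Phi_sexpr (i : nat) : sexpr :=
  match i with
  | O => SAdd (SMul (SConst (- / eps)) (SExp (- eps) 0)) (SConst (-1))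
  | S O => SMul (SCoord 1) (SSqrt 1 (2 * k) 1)
  | _ => SMul (SCoord 2) (SExp (- eps) 0)
  end.

Definition Phi (q : pt) : pt := (eval (Phi_sexpr 0) q, eval (Phi_sexpr 1) q, eval (Phi_sexpr 2) q).

Definition jacobian (p : pt) (i j : nat) : R := eval (deriv (Phi_sexpr i) j) p.

Lemma coord_Phi q i : (i < 3)%nat -> coord (Phi q) i = eval (Phi_sexpr i) q.
Proof. intros; destruct i as [|[|[|i]]]; reflexivity || lia. Qed.

Lemma defined_at_Phi_sexpr q i : 0 < 1 + 2 * k * coord q 1 -> defined_at (Phi_sexpr i) q.
Proof. destruct i as [|[|i]]; cbn; tauto. Qed.

Lemma Phi_y x y z : coord (Phi (x, y, z)) 1 = ytilde k y.
Proof. reflexivity. Qed.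

Lemma one_plus_Phi_x x y z : 1 + coord (Phi (x, y, z)) 0 = - (exp (- eps * x) / eps).
Proof. cbn; field; exact Heps. Qed.

Lemma dapp_jacobian_x x y z v : dapp (jacobian (x, y, z)) 0 v = exp (- eps * x) * coord v 0.
Proof. unfold dapp, jacobian; cbn; field; exact Heps. Qed.

Lemma dapp_jacobian_y x y z v :
  0 < 1 + 2 * k * y -> dapp (jacobian (x, y, z)) 1 v = ytilde_deriv k y * coord v 1.
Proof.
  intros Hy%sqrt_lt_R0. unfold dapp, jacobian, ytilde_deriv; cbn; field; lra.
Qed.

Lemma dapp_jacobian_z x y z v :
  dapp (jacobian (x, y, z)) 2 v = exp (- eps * x) * (coord v 2 - eps * z * coord v 0).
Proof. unfold dapp, jacobian; cbn; ring. Qed.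

Lemma det3_jacobian x y z :
  0 < 1 + 2 * k * y -> det3 (jacobian (x, y, z)) = exp (- eps * x) ^ 2 * ytilde_deriv k y.
Proof.
  intros Hy%sqrt_lt_R0. unfold det3, jacobian, ytilde_deriv; cbn; field; lra.
Qed.

Lemma pd_Phi p i j :
  0 < 1 + 2 * k * coord p 1 -> (i < 3)%nat ->
  pd (fun q => coord (Phi q) i) j p (jacobian p i j).
Proof.
  intros Hp Hi. apply (pd_ext _ (eval (Phi_sexpr i))).
  - intros q; now apply coord_Phi.
  - now apply pd_eval, defined_at_Phi_sexpr.
Qed.

Lemma det3_jacobian_neq0 p : ball0 (radius k) p -> det3 (jacobian p) <> 0.
Proof.
  intros Hp. pose proof (ball0_radius_pos _ _ Hp) as Hy.
  pose proof (ytilde_deriv_pos _ _ (ball0_radius_small _ _ Hp)).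
  destruct p as [[x y] z]; cbn [coord fst snd] in *.
  rewrite det3_jacobian by assumption.
  pose proof (exp_pos (- eps * x)). apply Rgt_not_eq. 
  apply Rmult_lt_0_compat; [apply pow_lt|]; assumption.
Qed.

Lemma smooth_on_Phi i :
  (i < 3)%nat -> smooth_on (fun q => coord (Phi q) i) (ball0 (radius k)).
Proof.
  intros Hi n.
  assert (Hdef : forall q, ball0 (radius k) q -> defined_at (Phi_sexpr i) q)
    by (intros q Hq; apply defined_at_Phi_sexpr, ball0_radius_pos, Hq).
  destruct i as [|[|[|i]]]; try lia; exact (Cn_eval n _ _ Hdef).
Qed.

Lemma Phi_inj p q :
  ball0 (radius k) p -> ball0 (radius k) q -> Phi p = Phi q -> p = q.
Proof.
  intros Hp%ball0_radius_small Hq%ball0_radius_small H.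
  destruct p as [[x1 y1] z1], q as [[x2 y2] z2]; cbn [coord fst snd] in *.
  injection H as Hx Hy Hz; cbn in Hx, Hy, Hz.
  assert (Hexp : exp (- eps * x1) = exp (- eps * x2)).
  { apply (Rmult_eq_reg_l (- / eps)); [lra|].
    apply Ropp_neq_0_compat, Rinv_neq_0_compat, Heps. }
  apply exp_inv in Hexp.
  assert (x1 = x2) as <- by (apply (Rmult_eq_reg_l (- eps)); lra).
  assert (z1 = z2) as <-
    by (apply (Rmult_eq_reg_r (exp (- eps * x1))); [exact Hz | apply Rgt_not_eq, exp_pos]).
  assert (y1 = y2) as <- by (apply (ytilde_inj k); assumption).
  reflexivity.
Qed.

Lemma SDist_iff_contact p v :
  0 < 1 + 2 * k * coord p 1 ->
  SDist (Ft1 eps k) Ft2 p v <->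
  dapp (jacobian p) 2 v - coord (Phi p) 1 ^ 2 / 2 * dapp (jacobian p) 0 v = 0.
Proof.
  destruct p as [[x y] z]; intros Hy; cbn [coord fst snd] in Hy.
  rewrite SDist_iff, dapp_jacobian_z, dapp_jacobian_x, Phi_y.
  replace (ytilde k y ^ 2) with (y ^ 2 * (sqrt (1 + 2 * k * y) * sqrt (1 + 2 * k * y)))
    by (unfold ytilde; ring).
  rewrite sqrt_sqrt by lra.
  replace (exp (- eps * x) * (coord v 2 - eps * z * coord v 0)
           - y ^ 2 * (1 + 2 * k * y) / 2 * (exp (- eps * x) * coord v 0))
    with (exp (- eps * x) * (coord v 2 - fM eps k y z * coord v 0))
    by (unfold fM; field).
  pose proof (exp_pos (- eps * x)).
  split; [intros ->; ring|].
  intros [E | E]%Rmult_integral; lra.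
Qed.

Lemma metric_in_Phi p a b :
  ball0 (radius k) p ->
  let v := vadd (vscal a (Ft1 eps k p)) (vscal b (Ft2 p)) in
  a ^ 2 + b ^ 2 =
    dapp (jacobian p) 0 v ^ 2 / (eps ^ 2 * (1 + coord (Phi p) 0) ^ 2)
    + dapp (jacobian p) 1 v ^ 2 / metric_h k (radius k) (coord (Phi p) 1) ^ 2.
Proof.
  intros Hp v. pose proof (ball0_radius_small _ _ Hp) as Hky.
  destruct p as [[x y] z]; cbn [coord fst snd] in Hky.
  pose proof (ball0_coord1 _ _ (radius_pos k) Hp) as Hy; cbn [coord fst snd] in Hy.
  pose proof (ytilde_deriv_pos _ _ Hky). pose proof (exp_pos (- eps * x)).
  rewrite one_plus_Phi_x, dapp_jacobian_x, dapp_jacobian_y, Phi_y, metric_h_ytilde by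
    (try assumption; apply Rabs_def2 in Hky; lra).
  unfold v; cbn. field. lra.
Qed.

End NormalForm.

Theorem proposition3 (eps eps' : R) (Heps : eps <> 0) :
  (exists B B1 B2 : vfield,
     is_lie_bracket (Ft1 eps eps') Ft2 B /\
     is_lie_bracket (Ft1 eps eps') B B1 /\
     is_lie_bracket Ft2 B B2 /\
     exists r, 0 < r /\
       forall p, ball0 r p ->
         (martinet_pt (Ft1 eps eps') Ft2 B p <-> coord p 1 = 0) /\
         (coord p 1 = 0 -> forall v, SDist3 (Ft1 eps eps') Ft2 B B1 B2 p v))
  /\
  (exists (r : R) (Phi : pt -> pt) (h : R -> R),
     0 < r /\
     (forall i, (i < 3)%nat -> smooth_on (fun q => coord (Phi q) i) (ball0 r)) /\
     (forall p q, ball0 r p -> ball0 r q -> Phi p = Phi q -> p = q) /\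
     (forall c, 0 < c -> exists d, 0 < d /\
        forall t, t <> 0 -> Rabs t < d ->
          Rabs (h t - (1 + 2 * eps' * t)) <= c * Rabs t) /\
     (forall p, ball0 r p ->
        exists J : nat -> nat -> R,
          (forall i j, (i < 3)%nat -> (j < 3)%nat ->
             pd (fun q => coord (Phi q) i) j p (J i j)) /\
          det3 J <> 0 /\
          (forall v, SDist (Ft1 eps eps') Ft2 p v <->
             dapp J 2 v - coord (Phi p) 1 ^ 2 / 2 * dapp J 0 v = 0) /\
          (forall a b,
             let v := vadd (vscal a (Ft1 eps eps' p)) (vscal b (Ft2 p)) in
             a ^ 2 + b ^ 2 =
               dapp J 0 v ^ 2 / (eps ^ 2 * (1 + coord (Phi p) 0) ^ 2)
               + dapp J 1 v ^ 2 / (h (coord (Phi p) 1)) ^ 2))).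
Proof.
  split.
  - destruct (lie_brackets eps eps') as (H12 & H1B & H2B).
    exists (bracket_F1F2 eps'), (bracket_F1B eps eps'), (bracket_F2B eps').
    repeat split; try assumption.
    exists (radius eps'); split; [apply radius_pos|].
    intros p Hp; split.
    + apply martinet_pt_iff, ball0_radius_small, Hp.
    + apply SDist3_full_on_surface.
  - exists (radius eps'), (Phi eps eps'), (metric_h eps' (radius eps')).
    split; [apply radius_pos|].
    split; [apply smooth_on_Phi|].
    split; [now apply Phi_inj|].
    split; [apply metric_h_expansion|].
    intros p Hp. pose proof (ball0_radius_pos _ _ Hp) as Hy.
    exists (jacobian eps eps' p); split; [|split; [|split]].
    + intros i j Hi _; now apply pd_Phi.
    + now apply det3_jacobian_neq0.
    + intros v; now apply SDist_iff_contact.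
    + intros a b; now apply metric_in_Phi.
Qed.
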